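(* Let $(n_k)_{k\ge0}$ be a strictly increasing sequence of positive integers such that $n_k$ divides $n_{k+1}$ for every $k\ge0$, and let $(a_k)_{k\ge0}$ be a sequence of positive real numbers decreasing to $0$ with $\sum_{k\ge0}a_k=+\infty$. Then there exists a continuous Borel probability measure $\sigma$ on $\mathbb{T}$ such that $|\hat\sigma(n_k)-1|\le a_k$ for every $k\ge0$.
   Context: $\hat\sigma(n)=\int_{\mathbb{T}}\lambda^n\,d\sigma(\lambda)$; continuous means atomless. *)

From Stdlib Require Import Reals.
Open Scope R_scope.

Inductive borel : (R -> Prop) -> Prop :=
| borel_Ico (a b : R) : borel (fun x => a <= x < b)
| borel_compl (A : R -> Prop) : borel A -> borel (fun x => ~ A x)
| borel_cunion (A : nat -> R -> Prop) :
    (forall n, borel (A n)) -> borel (fun x => exists n, A n x)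
| borel_ext (A B : R -> Prop) : (forall x, A x <-> B x) -> borel A -> borel B.

(* The circle T is parametrized by t in [0,1) via lambda = exp(2 pi i t).
   A Borel probability measure on T is a countably additive, nonnegative
   set function on the Borel sets of R carried by [0,1) with total mass 1. *)
Definition borel_prob_measure_T (mu : (R -> Prop) -> R) : Prop :=
  (forall A, borel A -> 0 <= mu A) /\
  (forall A : nat -> R -> Prop,
      (forall n, borel (A n)) ->
      (forall m n x, m <> n -> A m x -> A n x -> False) ->
      infinite_sum (fun n => mu (A n)) (mu (fun x => exists n, A n x))) /\
  mu (fun _ => True) = 1 /\
  mu (fun x => 0 <= x < 1) = 1.

(* continuous = atomless *)
Definition atomless (mu : (R -> Prop) -> R) : Prop :=
  forall t : R, mu (fun x => x = t) = 0.

(* Riemann-Stieltjes sums  sum_{j<N} f(j/N) mu([j/N,(j+1)/N))  which converge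
   to  \int_[0,1) f dmu  for f continuous and 1-periodic. *)
Definition RS_sum (mu : (R -> Prop) -> R) (f : R -> R) (N : nat) : R :=
  match N with
  | O => 0
  | S N' => sum_f_R0 (fun j => f (INR j / INR N) *
              mu (fun x => INR j / INR N <= x < (INR j + 1) / INR N)) N'
  end.

(* hat sigma(m) = re + i im, where
   re = \int cos(2 pi m t) dmu(t), im = \int sin(2 pi m t) dmu(t). *)
Definition fourier_coeff (mu : (R -> Prop) -> R) (m : nat) (re im : R) : Prop :=
  Un_cv (RS_sum mu (fun t => cos (2 * PI * INR m * t))) re /\
  Un_cv (RS_sum mu (fun t => sin (2 * PI * INR m * t))) im.

Definition cmod_minus1 (re im : R) : R := sqrt ((re - 1)^2 + im^2).

From Stdlib Require Import Reals Arith Lra Lia ZArith.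
From HB Require structures.
From mathcomp Require all_boot all_order all_algebra all_classical all_reals all_analysis.
From mathcomp Require Rstruct Rstruct_topology.
Open Scope R_scope.

(* sigma is a Cantor-type measure adapted to (n_k).  At level m the unit interval is cut
   into the n_m cells [i/n_m, (i+1)/n_m), each carrying a point mass at its left end; passing
   to level m+1 every cell is cut into n_(m+1)/n_m >= 2 subcells, a fraction p_m of its mass
   moves to the second subcell and the rest stays on the first.  At level k all the mass sits
   where exp(2 pi i n_k t) = 1, and each later step moves a mass p_m by 1/n_(m+1), so
   (1 - Re) + |Im| of the n_k-th coefficient grows by at most 4 pi n_k p_m / n_(m+1); as
   n_(m+1) >= 2 n_m these increments sum to at most 8 pi sup_(m>=k) p_m, which is <= a_k for
   p_m = min(1/2, a_m/64).  Riemann-Stieltjes sums of an L-Lipschitz function at mesh 1/N are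
   within L/N of their limit, and at mesh 1/n_m they are the level-m sums.  A level-m cell has
   mass at most prod_(j<m) (1 - p_j) <= 1/(1 + sum_(j<m) p_j), which tends to 0 because
   sum a_j diverges; hence the limiting distribution function is continuous and sigma, its
   Lebesgue-Stieltjes measure, is atomless. *)

Fixpoint fsum (N : nat) (g : nat -> R) : R :=
  match N with O => 0 | S N' => fsum N' g + g N' end.

Lemma fsum_ext N g h : (forall i, (i < N)%nat -> g i = h i) -> fsum N g = fsum N h.
Proof.
induction N as [|N IH]; intros H; simpl; [reflexivity|].
rewrite IH by (intros; apply H; lia). rewrite H by lia. reflexivity.
Qed.

Lemma fsum_split N M g : fsum (N + M) g = fsum N g + fsum M (fun j => g (N + j)%nat).
Proof.
induction M as [|M IH]; simpl.
- rewrite Nat.add_0_r; ring.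
- rewrite Nat.add_succ_r; simpl; rewrite IH; ring.
Qed.

Lemma fsum_block N M g :
  fsum (N * M) g = fsum N (fun i => fsum M (fun l => g (i * M + l)%nat)).
Proof.
induction N as [|N IH]; simpl; [reflexivity|].
rewrite Nat.add_comm, fsum_split, IH. reflexivity.
Qed.

Lemma fsum_plus N g h : fsum N (fun i => g i + h i) = fsum N g + fsum N h.
Proof. induction N as [|N IH]; simpl; [ring| rewrite IH; ring]. Qed.

Lemma fsum_minus N g h : fsum N (fun i => g i - h i) = fsum N g - fsum N h.
Proof. induction N as [|N IH]; simpl; [ring| rewrite IH; ring]. Qed.

Lemma fsum_scal N c g : fsum N (fun i => c * g i) = c * fsum N g.
Proof. induction N as [|N IH]; simpl; [ring| rewrite IH; ring]. Qed.

Lemma fsum_zero N g : (forall i, (i < N)%nat -> g i = 0) -> fsum N g = 0.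
Proof.
induction N as [|N IH]; intros H; simpl; [reflexivity|].
rewrite IH, H by (try intros; try apply H; lia). ring.
Qed.

Lemma fsum_le N g h : (forall i, (i < N)%nat -> g i <= h i) -> fsum N g <= fsum N h.
Proof.
induction N as [|N IH]; intros H; simpl; [lra|].
apply Rplus_le_compat; [apply IH; intros; apply H; lia| apply H; lia].
Qed.

Lemma fsum_nonneg N g : (forall i, (i < N)%nat -> 0 <= g i) -> 0 <= fsum N g.
Proof.
intros H. rewrite <- (fsum_zero N (fun _ => 0)) by reflexivity. apply fsum_le, H.
Qed.

Lemma fsum_abs N g : Rabs (fsum N g) <= fsum N (fun i => Rabs (g i)).
Proof.
induction N as [|N IH]; simpl.
- rewrite Rabs_R0; lra.
- eapply Rle_trans; [apply Rabs_triang|]. lra.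
Qed.

Lemma fsum_telescope N g : fsum N (fun l => g (S l) - g l) = g N - g O.
Proof. induction N as [|N IH]; simpl; [ring| rewrite IH; ring]. Qed.

Lemma fsum_mono_len N M g : (N <= M)%nat -> (forall i, 0 <= g i) -> fsum N g <= fsum M g.
Proof.
intros H Hg. replace M with (N + (M - N))%nat by lia. rewrite fsum_split.
assert (0 <= fsum (M - N) (fun j => g (N + j)%nat)) by (apply fsum_nonneg; auto). lra.
Qed.

Lemma sum_f_R0_fsum g N : sum_f_R0 g N = fsum (S N) g.
Proof. induction N as [|N IH]; simpl in *; [ring| rewrite IH; reflexivity]. Qed.

Definition nfloor (x : R) : nat := Z.to_nat (Int_part x).

Lemma nfloor_spec x : 0 <= x -> INR (nfloor x) <= x < INR (nfloor x) + 1.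
Proof.
intros Hx. destruct (base_Int_part x) as [H1 H2].
assert (Hz : (0 <= Int_part x)%Z).
{ assert (IZR 0 < IZR (Int_part x + 1)) by (rewrite plus_IZR; simpl; lra).
  apply lt_IZR in H. lia. }
unfold nfloor. rewrite INR_IZR_INZ, Z2Nat.id by exact Hz. lra.
Qed.

Lemma nfloor_small x : x < 1 -> nfloor x = 0%nat.
Proof.
intros Hx. destruct (base_Int_part x) as [H1 H2].
assert (IZR (Int_part x) < IZR 1) by lra. apply lt_IZR in H.
unfold nfloor. destruct (Int_part x); simpl; try reflexivity; lia.
Qed.

Lemma nfloor_ge k x : INR k <= x -> (k <= nfloor x)%nat.
Proof.
intros H. pose proof (pos_INR k). destruct (nfloor_spec x) as [_ H2]; [lra|].
assert (INR k < INR (S (nfloor x))) by (rewrite S_INR; lra).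
apply INR_lt in H1. lia.
Qed.

Lemma nfloor_lt k x : 0 <= x -> x < INR k -> (nfloor x < k)%nat.
Proof. intros H0 H. destruct (nfloor_spec x) as [H1 _]; [lra|]. apply INR_lt. lra. Qed.

Lemma nfloor_INR k : nfloor (INR k) = k.
Proof.
pose proof (pos_INR k). apply Nat.le_antisymm.
- apply Nat.lt_succ_r, nfloor_lt; [lra| rewrite S_INR; lra].
- apply nfloor_ge; lra.
Qed.

Lemma nfloor_mono x y : x <= y -> (nfloor x <= nfloor y)%nat.
Proof.
intros H. destruct (Rlt_dec x 1) as [Hx|Hx].
- rewrite nfloor_small by exact Hx. lia.
- apply nfloor_ge. destruct (nfloor_spec x); lra.
Qed.

Lemma Un_cv_le_const (v : nat -> R) l c : Un_cv v l -> (forall m, v m <= c) -> l <= c.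
Proof.
intros Hv Hc. apply Rnot_lt_le. intros Hlt.
destruct (Hv (l - c)) as [N HN]; [lra|].
specialize (HN N (Nat.le_refl N)). specialize (Hc N).
unfold R_dist in HN. apply Rabs_def2 in HN. lra.
Qed.

Lemma Un_cv_subseq (v : nat -> R) (phi : nat -> nat) l :
  (forall m, (m <= phi m)%nat) -> Un_cv v l -> Un_cv (fun m => v (phi m)) l.
Proof.
intros Hphi Hv eps He. destruct (Hv eps He) as [N HN].
exists N. intros m Hm. apply HN. specialize (Hphi m). lia.
Qed.

Lemma Rabs_sin_le x : Rabs (sin x) <= Rabs x.
Proof.
assert (Hpos : forall y, 0 <= y -> Rabs (sin y) <= y).
{ intros y Hy. destruct (Req_dec y 0) as [->|Hy0].
  - rewrite sin_0, Rabs_R0. lra.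
  - pose proof (sin_lt_x y ltac:(lra)). pose proof (SIN_bound y).
    destruct (Rle_dec y PI) as [HP|HP].
    + pose proof (sin_ge_0 y Hy HP). rewrite Rabs_right by lra. lra.
    + pose proof PI2_1. apply Rabs_le. lra. }
destruct (Rle_dec 0 x) as [Hx|Hx].
- rewrite (Rabs_right x) by lra. apply Hpos; lra.
- rewrite (Rabs_left x) by lra. replace x with (- (- x)) by ring.
  rewrite sin_neg, Rabs_Ropp, Ropp_involutive. apply Hpos. lra.
Qed.

Lemma Rabs_half x : Rabs (x / 2) = Rabs x / 2.
Proof. unfold Rdiv. rewrite Rabs_mult, (Rabs_right (/ 2)); [reflexivity| lra]. Qed.

Lemma cos_lipschitz x y : Rabs (cos x - cos y) <= Rabs (x - y).
Proof.
rewrite form2, !Rabs_mult, (Rabs_left (-2)) by lra.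
pose proof (Rabs_sin_le ((x - y) / 2)) as Hs. rewrite Rabs_half in Hs.
pose proof (SIN_bound ((x + y) / 2)).
assert (Rabs (sin ((x + y) / 2)) <= 1) by (apply Rabs_le; lra).
pose proof (Rabs_pos (sin ((x - y) / 2))). pose proof (Rabs_pos (sin ((x + y) / 2))).
nra.
Qed.

Lemma sin_lipschitz x y : Rabs (sin x - sin y) <= Rabs (x - y).
Proof.
rewrite form4, !Rabs_mult, (Rabs_right 2) by lra.
pose proof (Rabs_sin_le ((x - y) / 2)) as Hs. rewrite Rabs_half in Hs.
pose proof (COS_bound ((x + y) / 2)).
assert (Rabs (cos ((x + y) / 2)) <= 1) by (apply Rabs_le; lra).
pose proof (Rabs_pos (sin ((x - y) / 2))). pose proof (Rabs_pos (cos ((x + y) / 2))).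
nra.
Qed.

Lemma lipschitz_dilate (g : R -> R) w : 0 <= w ->
  (forall x y, Rabs (g x - g y) <= Rabs (x - y)) ->
  forall x y, Rabs (g (w * x) - g (w * y)) <= w * Rabs (x - y).
Proof.
intros Hw Hg x y. eapply Rle_trans; [apply Hg|].
rewrite <- Rmult_minus_distr_l, Rabs_mult, Rabs_right by lra. lra.
Qed.

Lemma sqrt_sum_sq_le_abs x y : sqrt (x ^ 2 + y ^ 2) <= Rabs x + Rabs y.
Proof.
pose proof (Rabs_pos x). pose proof (Rabs_pos y).
rewrite <- (sqrt_pow2 (Rabs x + Rabs y)) by lra.
apply sqrt_le_1_alt. rewrite <- (pow2_abs x), <- (pow2_abs y). nra.
Qed.

Lemma Rabs_defect_approx re im x y e :
  Rabs (re - x) <= e -> Rabs (im - y) <= e ->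
  Rabs (re - 1) + Rabs im <= 2 * e + (Rabs (1 - x) + Rabs y).
Proof.
intros Hx Hy.
pose proof (Rabs_triang (re - x) (x - 1)) as Hre. pose proof (Rabs_triang (im - y) y) as Him.
replace (re - x + (x - 1)) with (re - 1) in Hre by ring.
replace (im - y + y) with im in Him by ring.
rewrite (Rabs_minus_sym x 1) in Hre. lra.
Qed.

Section StieltjesSums.
Variable F : R -> R.
Hypothesis F_mono : forall x y, x <= y -> F x <= F y.
Hypothesis F_total : F 1 - F 0 = 1.

Definition grid N j := INR j / INR N.
Definition incr N j := F (grid N (S j)) - F (grid N j).
Definition stieltjes_sum (f : R -> R) (N : nat) := fsum N (fun j => f (grid N j) * incr N j).

Lemma grid_le N i j : (0 < N)%nat -> (i <= j)%nat -> grid N i <= grid N j.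
Proof.
intros HN Hij. unfold grid. apply Rmult_le_compat_r.
- apply Rlt_le, Rinv_0_lt_compat, lt_0_INR; exact HN.
- apply le_INR; exact Hij.
Qed.

Lemma incr_ge0 N j : (0 < N)%nat -> 0 <= incr N j.
Proof.
intros HN. unfold incr. pose proof (F_mono _ _ (grid_le N j (S j) HN ltac:(lia))). lra.
Qed.

Lemma fsum_incr N : (0 < N)%nat -> fsum N (incr N) = 1.
Proof.
intros HN. unfold incr. rewrite (fsum_telescope N (fun j => F (grid N j))).
unfold grid. simpl. replace (INR N / INR N) with 1 by (field; apply not_0_INR; lia).
replace (0 / INR N) with 0 by (field; apply not_0_INR; lia). exact F_total.
Qed.

Lemma grid_refine N M i l : (0 < N)%nat -> (0 < M)%nat ->
  grid (N * M) (i * M + l) = grid N i + INR l / INR (N * M).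
Proof.
intros HN HM. unfold grid. rewrite plus_INR, !mult_INR.
field. split; apply not_0_INR; lia.
Qed.

Lemma incr_refine N M i : (0 < N)%nat -> (0 < M)%nat ->
  incr N i = fsum M (fun l => incr (N * M) (i * M + l)).
Proof.
intros HN HM.
assert (HNr : INR N <> 0) by (apply not_0_INR; lia).
assert (HMr : INR M <> 0) by (apply not_0_INR; lia).
set (g := fun q => F (grid (N * M) (i * M + q))).
transitivity (g M - g O).
- unfold g, incr. rewrite !grid_refine by assumption. f_equal; f_equal.
  + unfold grid. rewrite S_INR, mult_INR. field. lra.
  + simpl (INR 0). unfold Rdiv. ring.
- rewrite <- fsum_telescope. apply fsum_ext. intros l _.
  unfold g, incr. rewrite Nat.add_succ_r. reflexivity.
Qed.

Lemma stieltjes_sum_refine f L N M : (0 < N)%nat -> (0 < M)%nat -> 0 <= L ->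
  (forall x y, Rabs (f x - f y) <= L * Rabs (x - y)) ->
  Rabs (stieltjes_sum f (N * M) - stieltjes_sum f N) <= L / INR N.
Proof.
intros HN HM HL Hf.
assert (HNr : 0 < INR N) by (apply lt_0_INR; exact HN).
assert (HMr : 0 < INR M) by (apply lt_0_INR; exact HM).
assert (HNM : (0 < N * M)%nat) by nia.
assert (Hstep : forall l, (l < M)%nat -> Rabs (INR l / INR (N * M)) <= / INR N).
{ intros l Hl. apply lt_INR in Hl. pose proof (pos_INR l).
  rewrite mult_INR, Rabs_right.
  - apply (Rmult_le_reg_r (INR N * INR M)); [nra|].
    field_simplify; lra.
  - apply Rle_ge. unfold Rdiv. apply Rmult_le_pos; [lra| apply Rlt_le, Rinv_0_lt_compat; nra]. }
unfold stieltjes_sum. rewrite fsum_block, <- fsum_minus.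
rewrite (fsum_ext N _ (fun i => fsum M (fun l =>
  (f (grid (N * M) (i * M + l)) - f (grid N i)) * incr (N * M) (i * M + l)))).
2:{ intros i _. rewrite (incr_refine N M i HN HM), <- fsum_scal, <- fsum_minus.
    apply fsum_ext. intros; ring. }
eapply Rle_trans; [apply fsum_abs|].
apply Rle_trans with (fsum N (fun i => L / INR N * fsum M (fun l => incr (N * M) (i * M + l)))).
- apply fsum_le. intros i _. rewrite <- fsum_scal.
  eapply Rle_trans; [apply fsum_abs|]. apply fsum_le. intros l Hl.
  pose proof (incr_ge0 (N * M) (i * M + l) HNM).
  rewrite Rabs_mult, (Rabs_right (incr _ _)) by lra.
  apply Rmult_le_compat_r; [lra|].
  eapply Rle_trans; [apply Hf|]. rewrite grid_refine by assumption.
  replace (grid N i + INR l / INR (N * M) - grid N i) with (INR l / INR (N * M)) by ring.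
  unfold Rdiv at 2. apply Rmult_le_compat_l; [lra| apply Hstep; exact Hl].
- rewrite fsum_scal, <- fsum_block, fsum_incr by exact HNM. lra.
Qed.

Lemma stieltjes_sum_cauchy f L : 0 <= L ->
  (forall x y, Rabs (f x - f y) <= L * Rabs (x - y)) -> Cauchy_crit (stieltjes_sum f).
Proof.
intros HL Hf eps He.
destruct (INR_unbounded (2 * L / eps)) as [N0 HN0].
assert (Hsmall : forall N, (N0 < N)%nat -> L / INR N < eps / 2).
{ intros N HN. assert (HNr : INR N0 < INR N) by (apply lt_INR; exact HN).
  assert (0 < INR N) by (pose proof (pos_INR N0); lra).
  apply (Rmult_lt_reg_r (2 * INR N / eps)); [apply Rdiv_lt_0_compat; lra|].
  replace (L / INR N * (2 * INR N / eps)) with (2 * L / eps) by (field; lra).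
  replace (eps / 2 * (2 * INR N / eps)) with (INR N) by (field; lra). lra. }
exists (S N0). intros N M HN HM. unfold R_dist.
pose proof (stieltjes_sum_refine f L N M ltac:(lia) ltac:(lia) HL Hf).
pose proof (stieltjes_sum_refine f L M N ltac:(lia) ltac:(lia) HL Hf).
rewrite Nat.mul_comm in H0.
pose proof (Hsmall N ltac:(lia)). pose proof (Hsmall M ltac:(lia)).
replace (stieltjes_sum f N - stieltjes_sum f M) with
  (-(stieltjes_sum f (N * M) - stieltjes_sum f N) + (stieltjes_sum f (N * M) - stieltjes_sum f M))
  by ring.
eapply Rle_lt_trans; [apply Rabs_triang|]. rewrite Rabs_Ropp. lra.
Qed.

Lemma stieltjes_sum_cv f L : 0 <= L ->
  (forall x y, Rabs (f x - f y) <= L * Rabs (x - y)) ->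
  exists l, Un_cv (stieltjes_sum f) l /\
    forall N, (0 < N)%nat -> Rabs (l - stieltjes_sum f N) <= L / INR N.
Proof.
intros HL Hf.
destruct (R_complete _ (stieltjes_sum_cauchy f L HL Hf)) as [l Hl].
exists l. split; [exact Hl|]. intros N HN.
assert (Hsub : Un_cv (fun M => stieltjes_sum f (N * S M)) l).
{ apply (Un_cv_subseq (stieltjes_sum f) (fun M => N * S M)%nat); [intros; nia| exact Hl]. }
apply (Un_cv_le_const (fun M => Rabs (stieltjes_sum f (N * S M) - stieltjes_sum f N))).
- rewrite <- Rabs_Ropp. replace (- (l - stieltjes_sum f N)) with (stieltjes_sum f N - l) by ring.
  rewrite Rabs_minus_sym. apply cv_cvabs, CV_minus; [exact Hsub|].
  intros e He. exists O. intros. unfold R_dist. rewrite Rminus_diag, Rabs_R0. exact He.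
- intros M. apply stieltjes_sum_refine; auto; lia.
Qed.

End StieltjesSums.

Lemma stieltjes_sum_RS_sum (F : R -> R) (mu : (R -> Prop) -> R) f N :
  (forall x y, x <= y -> mu (fun t => x <= t < y) = F y - F x) ->
  stieltjes_sum F f N = RS_sum mu f N.
Proof.
intros Hmu. destruct N as [|N]; [reflexivity|].
unfold RS_sum. rewrite sum_f_R0_fsum. unfold stieltjes_sum. apply fsum_ext. intros j _.
rewrite Hmu.
- unfold incr, grid. rewrite (S_INR j). reflexivity.
- unfold Rdiv. apply Rmult_le_compat_r; [apply Rlt_le, Rinv_0_lt_compat, lt_0_INR; lia| lra].
Qed.

Section CantorDistribution.
Variable n : nat -> nat.
Variable p : nat -> R.
Hypothesis n_pos : forall k, (0 < n k)%nat.
Hypothesis n_lt : forall k, (n k < n (S k))%nat.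
Hypothesis n_dvd : forall k, Nat.divide (n k) (n (S k)).
Hypothesis p_ge0 : forall m, 0 <= p m.
Hypothesis p_le_half : forall m, p m <= 1 / 2.

Definition ratio m := (n (S m) / n m)%nat.

Lemma n_succ m : n (S m) = (ratio m * n m)%nat.
Proof.
unfold ratio. destruct (n_dvd m) as [z Hz]. rewrite Hz at 2.
rewrite Nat.div_mul by (specialize (n_pos m); lia). exact Hz.
Qed.

Lemma ratio_ge2 m : (2 <= ratio m)%nat.
Proof.
pose proof (n_succ m). pose proof (n_lt m). pose proof (n_pos m).
destruct (ratio m) as [|[|k]]; simpl in *; lia.
Qed.

Lemma n_double m : (2 * n m <= n (S m))%nat.
Proof. rewrite n_succ. pose proof (ratio_ge2 m). nia. Qed.

Lemma n_ge_succ m : (S m <= n m)%nat.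
Proof. induction m; [apply n_pos| pose proof (n_lt m); lia]. Qed.

Lemma INR_n_pos m : 0 < INR (n m).
Proof. apply lt_0_INR, n_pos. Qed.

Definition split_weight m d :=
  match d with O => 1 - p m | 1%nat => p m | _ => 0 end.

(* Cell [i] of level [S m] is the subcell [i mod ratio m] of cell [i / ratio m] of level [m]. *)
Fixpoint weight m i :=
  match m with
  | O => match i with O => 1 | _ => 0 end
  | S m' => weight m' (i / ratio m')%nat * split_weight m' (i mod ratio m')%nat
  end.

Fixpoint weight_bound m := match m with O => 1 | S m' => weight_bound m' * (1 - p m') end.

Lemma split_weight_ge0 m d : 0 <= split_weight m d.
Proof. pose proof (p_ge0 m). pose proof (p_le_half m). destruct d as [|[|d]]; simpl; lra. Qed.

Lemma split_weight_le m d : split_weight m d <= 1 - p m.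
Proof. pose proof (p_ge0 m). pose proof (p_le_half m). destruct d as [|[|d]]; simpl; lra. Qed.

Lemma fsum_split_weight m : fsum (ratio m) (split_weight m) = 1.
Proof.
pose proof (ratio_ge2 m). replace (ratio m) with (2 + (ratio m - 2))%nat by lia.
rewrite fsum_split, (fsum_zero (_ - _)) by reflexivity. simpl. ring.
Qed.

Lemma weight_ge0 m i : 0 <= weight m i.
Proof.
revert i; induction m; intros i; simpl.
- destruct i; lra.
- apply Rmult_le_pos; [apply IHm| apply split_weight_ge0].
Qed.

Lemma weight_le_bound m i : weight m i <= weight_bound m.
Proof.
revert i; induction m; intros i; simpl.
- destruct i; lra.
- apply Rmult_le_compat; [apply weight_ge0| apply split_weight_ge0| apply IHm| apply split_weight_le].
Qed.

Lemma weight_succ m i d : (d < ratio m)%nat ->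
  weight (S m) (i * ratio m + d) = weight m i * split_weight m d.
Proof.
intros Hd. simpl. pose proof (ratio_ge2 m).
rewrite Nat.div_add_l, Nat.div_small, Nat.add_0_r by lia.
rewrite Nat.add_comm, Nat.Div0.mod_add, Nat.mod_small by lia. reflexivity.
Qed.

Lemma weight_out m i : (n m <= i)%nat -> weight m i = 0.
Proof.
revert i; induction m; intros i Hi; simpl.
- pose proof (n_pos 0). destruct i; [lia| reflexivity].
- rewrite IHm; [ring|]. rewrite n_succ in Hi. pose proof (ratio_ge2 m).
  apply Nat.div_le_lower_bound; lia.
Qed.

Lemma fsum_level_succ m g :
  fsum (n (S m)) g = fsum (n m) (fun i => fsum (ratio m) (fun d => g (i * ratio m + d)%nat)).
Proof. rewrite n_succ, Nat.mul_comm, fsum_block. reflexivity. Qed.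

Lemma fsum_weight_block m i :
  fsum (ratio m) (fun d => weight (S m) (i * ratio m + d)) = weight m i.
Proof.
rewrite (fsum_ext _ _ (fun d => weight m i * split_weight m d)) by (intros; apply weight_succ; auto).
rewrite fsum_scal, fsum_split_weight. ring.
Qed.

Lemma fsum_weight m : fsum (n m) (weight m) = 1.
Proof.
induction m.
- pose proof (n_pos 0). replace (n 0) with (1 + (n 0 - 1))%nat by lia.
  rewrite fsum_split, (fsum_zero (_ - _)) by reflexivity. simpl. ring.
- rewrite fsum_level_succ, <- IHm. apply fsum_ext. intros i _. apply fsum_weight_block.
Qed.

Definition cumul m i := fsum i (weight m).

Lemma cumul_ge0 m i : 0 <= cumul m i.
Proof. apply fsum_nonneg; intros; apply weight_ge0. Qed.

Lemma cumul_mono m i j : (i <= j)%nat -> cumul m i <= cumul m j.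
Proof. intros; apply fsum_mono_len; auto; apply weight_ge0. Qed.

Lemma cumul_full m i : (n m <= i)%nat -> cumul m i = 1.
Proof.
intros H. unfold cumul. replace i with (n m + (i - n m))%nat by lia.
rewrite fsum_split, fsum_weight, fsum_zero; [ring|]. intros; apply weight_out; lia.
Qed.

Lemma cumul_le1 m i : cumul m i <= 1.
Proof.
destruct (Nat.le_gt_cases (n m) i).
- rewrite cumul_full; auto; lra.
- rewrite <- (cumul_full m (n m)) by lia. apply cumul_mono; lia.
Qed.

Lemma cumul_level_succ m i : cumul (S m) (i * ratio m) = cumul m i.
Proof.
unfold cumul. rewrite fsum_block. apply fsum_ext. intros j _. apply fsum_weight_block.
Qed.

Fixpoint ratio_prod m d := match d with O => 1%nat | S d' => (ratio (m + d') * ratio_prod m d')%nat end.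

Lemma n_ratio_prod m d : n (m + d) = (ratio_prod m d * n m)%nat.
Proof.
induction d; simpl.
- rewrite Nat.add_0_r; lia.
- rewrite <- plus_n_Sm, n_succ, IHd. ring.
Qed.

Lemma cumul_ratio_prod m d i : cumul (m + d) (i * ratio_prod m d) = cumul m i.
Proof.
induction d; simpl.
- rewrite Nat.add_0_r, Nat.mul_1_r. reflexivity.
- rewrite <- plus_n_Sm.
  replace (i * (ratio (m + d) * ratio_prod m d))%nat
    with (i * ratio_prod m d * ratio (m + d))%nat by ring.
  rewrite cumul_level_succ. exact IHd.
Qed.

Definition cumul_at t m := cumul m (nfloor (INR (n m) * t)).

Lemma INR_n_succ m : INR (n (S m)) = INR (ratio m) * INR (n m).
Proof. rewrite n_succ, mult_INR. reflexivity. Qed.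

Lemma INR_n_ratio_prod m d : INR (n (m + d)) = INR (ratio_prod m d) * INR (n m).
Proof. rewrite n_ratio_prod, mult_INR. reflexivity. Qed.

Lemma cumul_at_growing t : Un_growing (cumul_at t).
Proof.
intros m. unfold cumul_at. set (k := nfloor (INR (n m) * t)).
rewrite <- (cumul_level_succ m k). apply cumul_mono.
destruct (Rle_dec 0 t) as [Ht|Ht].
- apply nfloor_ge. rewrite mult_INR, INR_n_succ.
  destruct (nfloor_spec (INR (n m) * t)) as [H1 _].
  + apply Rmult_le_pos; [apply pos_INR| exact Ht].
  + fold k in H1. pose proof (pos_INR (ratio m)). nra.
- unfold k. rewrite nfloor_small; [lia|]. pose proof (pos_INR (n m)). nra.
Qed.

Lemma cumul_at_bound t : bound (EUn (cumul_at t)).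
Proof. exists 1. intros x [i ->]. apply cumul_le1. Qed.

Definition cantor_cdf t := proj1_sig (growing_cv _ (cumul_at_growing t) (cumul_at_bound t)).

Lemma cantor_cdf_cv t : Un_cv (cumul_at t) (cantor_cdf t).
Proof. unfold cantor_cdf. destruct (growing_cv _ _ _) as [l Hl]. exact Hl. Qed.

Lemma cumul_at_le_cdf t m : cumul_at t m <= cantor_cdf t.
Proof. apply growing_ineq; [apply cumul_at_growing| apply cantor_cdf_cv]. Qed.

Lemma cantor_cdf_le t c : (forall m, cumul_at t m <= c) -> cantor_cdf t <= c.
Proof. apply Un_cv_le_const, cantor_cdf_cv. Qed.

Lemma cantor_cdf_le_cumul t m : cantor_cdf t <= cumul m (S (nfloor (INR (n m) * t))).
Proof.
apply cantor_cdf_le. intros M.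
destruct (Nat.le_gt_cases m M) as [HM|HM].
- replace M with (m + (M - m))%nat by lia. set (d := (M - m)%nat).
  unfold cumul_at. rewrite <- (cumul_ratio_prod m d). apply cumul_mono.
  destruct (Rle_dec 0 t) as [Ht|Ht].
  + apply Nat.lt_le_incl, nfloor_lt.
    * apply Rmult_le_pos; [apply pos_INR| exact Ht].
    * rewrite INR_n_ratio_prod, mult_INR.
      destruct (nfloor_spec (INR (n m) * t)) as [_ H2].
      -- apply Rmult_le_pos; [apply pos_INR| exact Ht].
      -- rewrite S_INR. pose proof (n_pos (m + d)). rewrite n_ratio_prod in H.
         assert (0 < INR (ratio_prod m d)) by (apply lt_0_INR; nia).
         nra.
  + rewrite nfloor_small; [lia|]. pose proof (pos_INR (n (m + d))). nra.
- eapply Rle_trans; [apply (tech9 _ (cumul_at_growing t) M m); lia|].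
  unfold cumul_at. apply cumul_mono. lia.
Qed.

Lemma cantor_cdf_grid m i : cantor_cdf (INR i / INR (n m)) = cumul m i.
Proof.
pose proof (INR_n_pos m) as Hn.
assert (Hu : cumul_at (INR i / INR (n m)) m = cumul m i).
{ unfold cumul_at. replace (INR (n m) * (INR i / INR (n m))) with (INR i) by (field; lra).
  rewrite nfloor_INR. reflexivity. }
apply Rle_antisym.
- apply cantor_cdf_le. intros M.
  destruct (Nat.le_gt_cases m M) as [HM|HM].
  + replace M with (m + (M - m))%nat by lia. set (d := (M - m)%nat).
    unfold cumul_at. rewrite <- (cumul_ratio_prod m d i).
    replace (INR (n (m + d)) * (INR i / INR (n m))) with (INR (i * ratio_prod m d)).
    * rewrite nfloor_INR. lra.
    * rewrite INR_n_ratio_prod, mult_INR. field. lra.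
  + rewrite <- Hu. apply (tech9 _ (cumul_at_growing _)). lia.
- rewrite <- Hu. apply cumul_at_le_cdf.
Qed.

Lemma cantor_cdf_mono t s : t <= s -> cantor_cdf t <= cantor_cdf s.
Proof.
intros H. apply cantor_cdf_le. intros M. eapply Rle_trans; [|apply (cumul_at_le_cdf s M)].
unfold cumul_at. apply cumul_mono, nfloor_mono. pose proof (pos_INR (n M)). nra.
Qed.

Lemma cantor_cdf_zero t : t <= 0 -> cantor_cdf t = 0.
Proof.
intros H. apply Rle_antisym.
- apply cantor_cdf_le. intros M. unfold cumul_at. rewrite nfloor_small.
  + unfold cumul; simpl; lra.
  + pose proof (pos_INR (n M)). nra.
- pose proof (cumul_at_le_cdf t 0). pose proof (cumul_ge0 0 (nfloor (INR (n 0) * t))).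
  unfold cumul_at in *. lra.
Qed.

Lemma cantor_cdf_one t : 1 <= t -> cantor_cdf t = 1.
Proof.
intros H. apply Rle_antisym.
- apply cantor_cdf_le. intros M. apply cumul_le1.
- pose proof (cumul_at_le_cdf t 0). unfold cumul_at in *. rewrite cumul_full in H0; [lra|].
  apply nfloor_ge. pose proof (pos_INR (n 0)). nra.
Qed.

Lemma cantor_cdf_total : cantor_cdf 1 - cantor_cdf 0 = 1.
Proof. rewrite cantor_cdf_one, cantor_cdf_zero by lra. ring. Qed.

(* An interval of length [< 1/n m] meets at most two cells of level [m]. *)
Lemma cantor_cdf_jump t s m :
  s <= t -> t < s + 1 / INR (n m) -> cantor_cdf t - cantor_cdf s <= 2 * weight_bound m.
Proof.
intros H1 H2. pose proof (INR_n_pos m) as Hn.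
set (k := nfloor (INR (n m) * s)).
assert (Hk : (nfloor (INR (n m) * t) <= S k)%nat).
{ destruct (Rle_dec 0 (INR (n m) * t)) as [Ht|Ht]; [|rewrite nfloor_small; [lia|lra]].
  apply Nat.lt_succ_r, nfloor_lt; [exact Ht|].
  assert (INR (n m) * t < INR (n m) * s + 1).
  { replace (INR (n m) * s + 1) with (INR (n m) * (s + 1 / INR (n m))) by (field; lra).
    apply Rmult_lt_compat_l; assumption. }
  destruct (Rle_dec 0 (INR (n m) * s)) as [Hs|Hs].
  - destruct (nfloor_spec _ Hs). fold k in H3. rewrite !S_INR. lra.
  - unfold k. rewrite nfloor_small by lra. simpl. lra. }
pose proof (cantor_cdf_le_cumul t m). pose proof (cumul_at_le_cdf s m).
unfold cumul_at in H0. fold k in H0.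
assert (cumul m (S (nfloor (INR (n m) * t))) <= cumul m (S (S k))) by (apply cumul_mono; lia).
assert (cumul m (S (S k)) = cumul m k + weight m k + weight m (S k)) by (unfold cumul; simpl; ring).
pose proof (weight_le_bound m k). pose proof (weight_le_bound m (S k)).
lra.
Qed.

Lemma weight_bound_le m : weight_bound m <= 1 / (1 + fsum m p).
Proof.
induction m; simpl; [lra|].
set (X := fsum m p) in *.
assert (0 <= X) by (apply fsum_nonneg; intros; apply p_ge0).
pose proof (p_ge0 m). pose proof (p_le_half m).
apply Rle_trans with ((1 - p m) / (1 + X)).
- replace ((1 - p m) / (1 + X)) with (1 / (1 + X) * (1 - p m)) by (field; lra).
  apply Rmult_le_compat_r; [lra| exact IHm].
- apply (Rmult_le_reg_r ((1 + X) * (1 + (X + p m)))); [nra|].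
  replace ((1 - p m) / (1 + X) * ((1 + X) * (1 + (X + p m)))) with ((1 - p m) * (1 + (X + p m)))
    by (field; lra).
  replace (1 / (1 + (X + p m)) * ((1 + X) * (1 + (X + p m)))) with (1 + X) by (field; lra).
  nra.
Qed.

Hypothesis p_diverge : cv_infty (fun N => sum_f_R0 p N).

Lemma weight_bound_small eps : 0 < eps -> exists m, weight_bound m < eps.
Proof.
intros He. destruct (p_diverge (/ eps)) as [N HN].
specialize (HN N (Nat.le_refl N)). rewrite sum_f_R0_fsum in HN.
exists (S N). eapply Rle_lt_trans; [apply weight_bound_le|].
assert (0 < / eps) by (apply Rinv_0_lt_compat; lra).
apply (Rmult_lt_reg_r (1 + fsum (S N) p)); [lra|].
replace (1 / (1 + fsum (S N) p) * (1 + fsum (S N) p)) with 1 by (field; lra).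
apply (Rmult_lt_reg_l (/ eps)); [exact H|].
rewrite <- Rmult_assoc, Rinv_l, Rmult_1_l by lra. lra.
Qed.

Lemma cantor_cdf_continuous : continuity cantor_cdf.
Proof.
intros x eps He.
destruct (weight_bound_small (eps / 2)) as [m Hm]; [lra|].
pose proof (INR_n_pos m) as Hn.
exists (1 / INR (n m)). split.
- unfold Rdiv; rewrite Rmult_1_l; apply Rinv_0_lt_compat; exact Hn.
- intros y [_ Hy]. simpl in Hy |- *. unfold R_dist in Hy |- *.
  destruct (Rle_dec x y) as [Hxy|Hxy].
  + rewrite Rabs_right in Hy by lra. pose proof (cantor_cdf_jump y x m Hxy ltac:(lra)).
    pose proof (cantor_cdf_mono x y Hxy). rewrite Rabs_right by lra. lra.
  + rewrite Rabs_left in Hy by lra. pose proof (cantor_cdf_jump x y m ltac:(lra) ltac:(lra)).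
    pose proof (cantor_cdf_mono y x ltac:(lra)). rewrite Rabs_left1 by lra. lra.
Qed.


Lemma n_unbounded k x : exists m, (k <= m)%nat /\ x < INR (n m).
Proof.
destruct (INR_unbounded x) as [m0 Hm0]. exists (k + m0)%nat. split; [lia|].
eapply Rlt_le_trans; [exact Hm0|]. apply le_INR. pose proof (n_ge_succ (k + m0)). lia.
Qed.

Definition freq k := 2 * PI * INR (n k).

(* Controls [|Re - 1| + |Im|] of the [n k]-th Fourier coefficient at once. *)
Definition defect k t := (1 - cos (freq k * t)) + Rabs (sin (freq k * t)).

Definition level_sum m g := fsum (n m) (fun i => g (INR i / INR (n m)) * weight m i).

Lemma freq_ge0 k : 0 <= freq k.
Proof. unfold freq. pose proof PI_RGT_0. pose proof (pos_INR (n k)). nra. Qed.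

Lemma defect_lipschitz k t d : 0 <= d -> defect k (t + d) <= defect k t + 2 * freq k * d.
Proof.
intros Hd. unfold defect. pose proof (freq_ge0 k).
pose proof (lipschitz_dilate cos (freq k) (freq_ge0 k) cos_lipschitz (t + d) t) as Hc.
pose proof (lipschitz_dilate sin (freq k) (freq_ge0 k) sin_lipschitz (t + d) t) as Hs.
replace (t + d - t) with d in Hc, Hs by ring. rewrite (Rabs_right d) in Hc, Hs by lra.
pose proof (Rabs_triang_inv (sin (freq k * (t + d))) (sin (freq k * t))).
pose proof (Rle_abs (sin (freq k * (t + d)) - sin (freq k * t))).
pose proof (Rle_abs (- (cos (freq k * (t + d)) - cos (freq k * t)))) as Hneg.
rewrite Rabs_Ropp in Hneg. lra.
Qed.

Lemma defect_grid k i : defect k (INR i / INR (n k)) = 0.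
Proof.
pose proof (INR_n_pos k). unfold defect, freq.
replace (2 * PI * INR (n k) * (INR i / INR (n k))) with (0 + 2 * INR i * PI) by (field; lra).
rewrite cos_period, sin_period, cos_0, sin_0, Rabs_R0. ring.
Qed.

Lemma level_sum_succ m g : level_sum (S m) g = fsum (n m) (fun i => weight m i *
  ((1 - p m) * g (INR i / INR (n m)) + p m * g (INR i / INR (n m) + 1 / INR (n (S m))))).
Proof.
unfold level_sum. rewrite fsum_level_succ. apply fsum_ext. intros i _.
pose proof (ratio_ge2 m).
assert (Hr : 0 < INR (ratio m)) by (apply lt_0_INR; lia).
pose proof (INR_n_pos m).
replace (ratio m) with (2 + (ratio m - 2))%nat at 1 by lia.
rewrite fsum_split, (fsum_zero (_ - _)).
- cbn [fsum]. rewrite !weight_succ by lia. simpl.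
  rewrite INR_n_succ, !plus_INR, !mult_INR. simpl.
  replace ((INR i * INR (ratio m) + 0) / (INR (ratio m) * INR (n m))) with (INR i / INR (n m))
    by (field; lra).
  replace ((INR i * INR (ratio m) + 1) / (INR (ratio m) * INR (n m)))
    with (INR i / INR (n m) + 1 / (INR (ratio m) * INR (n m))) by (field; lra).
  ring.
- intros j Hj. rewrite weight_succ by lia. simpl. ring.
Qed.

(* The mass [p m] moving by [1 / n (S m)] at level [S m] costs at most [2 freq k p m / n (S m)];
   these costs telescope because [n (S m) >= 2 n m]. *)
Lemma level_sum_defect k m c : (k <= m)%nat -> (forall j, (k <= j)%nat -> p j <= c) ->
  level_sum m (defect k) <= 4 * freq k * c * (/ INR (n k) - / INR (n m)).
Proof.
intros Hkm Hc. pose proof (freq_ge0 k). induction Hkm as [|m Hkm IH].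
- unfold level_sum. rewrite fsum_zero; [lra|]. intros i _. rewrite defect_grid. ring.
- rewrite level_sum_succ.
  pose proof (p_ge0 m). pose proof (Hc m Hkm).
  pose proof (INR_n_pos m). pose proof (INR_n_pos (S m)).
  assert (H2n : 2 * INR (n m) <= INR (n (S m))).
  { replace 2 with (INR 2) by reflexivity. rewrite <- mult_INR. apply le_INR, n_double. }
  set (del := 1 / INR (n (S m))).
  assert (Hdel : 0 <= del) by (unfold del; apply Rlt_le, Rdiv_lt_0_compat; lra).
  apply Rle_trans with (level_sum m (defect k) + p m * (2 * freq k * del)).
  + replace (level_sum m (defect k) + p m * (2 * freq k * del)) with (fsum (n m) (fun i =>
      defect k (INR i / INR (n m)) * weight m i + p m * (2 * freq k * del) * weight m i)).
    2:{ rewrite fsum_plus, fsum_scal, fsum_weight. unfold level_sum. ring. }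
    apply fsum_le. intros i _.
    set (x := INR i / INR (n m)).
    pose proof (defect_lipschitz k x del Hdel). pose proof (weight_ge0 m i).
    assert ((1 - p m) * defect k x + p m * defect k (x + del)
            <= defect k x + p m * (2 * freq k * del)) by nra.
    nra.
  + assert (Hd : del <= 2 * (/ INR (n m) - / INR (n (S m)))).
    { unfold del. apply (Rmult_le_reg_r (INR (n m) * INR (n (S m)))); [nra|].
      replace (1 / INR (n (S m)) * (INR (n m) * INR (n (S m)))) with (INR (n m)) by (field; lra).
      replace (2 * (/ INR (n m) - / INR (n (S m))) * (INR (n m) * INR (n (S m))))
        with (2 * INR (n (S m)) - 2 * INR (n m)) by (field; lra).
      lra. }
    assert (Hc0 : 0 <= c) by lra.
    assert (p m * (2 * freq k * del) <= c * (2 * freq k * del))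
      by (apply Rmult_le_compat_r; nra).
    assert (c * (2 * freq k * del) <= 4 * freq k * c * (/ INR (n m) - / INR (n (S m)))).
    { replace (4 * freq k * c * (/ INR (n m) - / INR (n (S m))))
        with (2 * freq k * c * (2 * (/ INR (n m) - / INR (n (S m))))) by ring.
      replace (c * (2 * freq k * del)) with (2 * freq k * c * del) by ring.
      apply Rmult_le_compat_l; nra. }
    lra.
Qed.

Lemma level_sum_cos_sin m k :
  Rabs (1 - level_sum m (fun t => cos (freq k * t))) + Rabs (level_sum m (fun t => sin (freq k * t)))
  <= level_sum m (defect k).
Proof.
assert (Hcos : level_sum m (fun t => cos (freq k * t)) <= 1).
{ rewrite <- (fsum_weight m). unfold level_sum. apply fsum_le. intros i _.
  pose proof (COS_bound (freq k * (INR i / INR (n m)))). pose proof (weight_ge0 m i). nra. }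
assert (Hsin : Rabs (level_sum m (fun t => sin (freq k * t)))
               <= level_sum m (fun t => Rabs (sin (freq k * t)))).
{ unfold level_sum. eapply Rle_trans; [apply fsum_abs|]. apply fsum_le. intros i _.
  rewrite Rabs_mult, (Rabs_right (weight m i)) by (apply Rle_ge, weight_ge0). lra. }
assert (Hsplit : level_sum m (defect k) = 1 - level_sum m (fun t => cos (freq k * t))
                   + level_sum m (fun t => Rabs (sin (freq k * t)))).
{ rewrite <- (fsum_weight m) at 1. unfold level_sum. rewrite <- fsum_minus, <- fsum_plus.
  apply fsum_ext. intros i _. unfold defect. ring. }
rewrite Rabs_right by lra. lra.
Qed.

Lemma stieltjes_sum_level f m : stieltjes_sum cantor_cdf f (n m) = level_sum m f.
Proof.
unfold stieltjes_sum, level_sum, incr, grid. apply fsum_ext. intros i _.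
rewrite !cantor_cdf_grid. unfold cumul. simpl. ring.
Qed.

Lemma cantor_fourier_bound k c : (forall j, (k <= j)%nat -> p j <= c) ->
  exists re im,
    Un_cv (stieltjes_sum cantor_cdf (fun t => cos (freq k * t))) re /\
    Un_cv (stieltjes_sum cantor_cdf (fun t => sin (freq k * t))) im /\
    Rabs (re - 1) + Rabs im <= 8 * PI * c.
Proof.
intros Hc. pose proof (freq_ge0 k) as Hfr.
destruct (stieltjes_sum_cv cantor_cdf cantor_cdf_mono cantor_cdf_total _ _ Hfr
  (lipschitz_dilate cos (freq k) Hfr cos_lipschitz)) as [re [Hre Ere]].
destruct (stieltjes_sum_cv cantor_cdf cantor_cdf_mono cantor_cdf_total _ _ Hfr
  (lipschitz_dilate sin (freq k) Hfr sin_lipschitz)) as [im [Him Eim]].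
exists re, im. split; [exact Hre| split; [exact Him|]].
apply Rle_plus_epsilon. intros eps He.
destruct (n_unbounded k (2 * freq k / eps)) as [m [Hkm Hnm]].
pose proof (INR_n_pos m). pose proof (INR_n_pos k).
assert (Herr : 2 * (freq k / INR (n m)) <= eps).
{ apply (Rmult_le_reg_r (INR (n m) / eps)); [apply Rdiv_lt_0_compat; lra|].
  replace (2 * (freq k / INR (n m)) * (INR (n m) / eps)) with (2 * freq k / eps) by (field; lra).
  replace (eps * (INR (n m) / eps)) with (INR (n m)) by (field; lra). lra. }
specialize (Ere (n m) (n_pos m)). specialize (Eim (n m) (n_pos m)).
rewrite stieltjes_sum_level in Ere, Eim.
pose proof (Rabs_defect_approx _ _ _ _ _ Ere Eim).
pose proof (level_sum_cos_sin m k). pose proof (level_sum_defect k m c Hkm Hc).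
assert (Hc0 : 0 <= c) by (pose proof (Hc k (Nat.le_refl k)); pose proof (p_ge0 k); lra).
assert (4 * freq k * c * (/ INR (n k) - / INR (n m)) <= 8 * PI * c).
{ assert (0 < / INR (n m)) by (apply Rinv_0_lt_compat; lra).
  replace (8 * PI * c) with (4 * freq k * c * / INR (n k)) by (unfold freq; field; lra).
  assert (0 <= 4 * freq k * c) by nra. nra. }
lra.
Qed.

Lemma cantor_fourier_coeff (mu : (R -> Prop) -> R) k c :
  (forall x y, x <= y -> mu (fun t => x <= t < y) = cantor_cdf y - cantor_cdf x) ->
  (forall j, (k <= j)%nat -> p j <= c) ->
  exists re im, fourier_coeff mu (n k) re im /\ cmod_minus1 re im <= 8 * PI * c.
Proof.
intros Hmu Hc. destruct (cantor_fourier_bound k c Hc) as [re [im [Hre [Him Hb]]]].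
exists re, im. split; [split|].
- eapply Un_cv_ext; [|exact Hre]. intros N. apply stieltjes_sum_RS_sum, Hmu.
- eapply Un_cv_ext; [|exact Him]. intros N. apply stieltjes_sum_RS_sum, Hmu.
- eapply Rle_trans; [apply sqrt_sum_sq_le_abs| exact Hb].
Qed.

End CantorDistribution.

Lemma cv_infty_sum_Rmin (a : nat -> R) b c : 0 < b -> 0 < c ->
  (forall j, 0 < a j) -> Un_decreasing a -> cv_infty (fun N => sum_f_R0 a N) ->
  cv_infty (fun N => sum_f_R0 (fun j => Rmin b (a j / c)) N).
Proof.
intros Hb Hc Ha Hdec Hdiv.
set (kappa := Rmin (/ c) (b / a O)).
assert (Hk : 0 < kappa).
{ apply Rmin_glb_lt; [apply Rinv_0_lt_compat; lra| apply Rdiv_lt_0_compat; auto]. }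
assert (Hlow : forall j, kappa * a j <= Rmin b (a j / c)).
{ intros j. pose proof (Ha j). pose proof (Ha O). pose proof (decreasing_prop a O j Hdec ltac:(lia)).
  apply Rmin_glb.
  - apply Rle_trans with (b / a O * a j).
    + apply Rmult_le_compat_r; [lra| apply Rmin_r].
    + apply (Rmult_le_reg_r (a O)); [lra|].
      replace (b / a O * a j * a O) with (b * a j) by (field; lra). nra.
  - unfold Rdiv. rewrite Rmult_comm. apply Rmult_le_compat_l; [lra| apply Rmin_l]. }
intros M. destruct (Hdiv (M / kappa)) as [N HN]. exists N. intros m Hm.
specialize (HN m Hm).
apply Rlt_le_trans with (kappa * sum_f_R0 a m).
- apply (Rmult_lt_reg_l (/ kappa)); [apply Rinv_0_lt_compat; lra|].
  rewrite <- Rmult_assoc, Rinv_l, Rmult_1_l by lra. unfold Rdiv in HN. lra.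
- rewrite scal_sum. apply sum_Rle. intros j _. rewrite Rmult_comm. apply Hlow.
Qed.

Module StieltjesMeasure.
Import HB.structures.
Import all_boot all_order all_algebra all_classical all_reals all_analysis.
Import Rstruct Rstruct_topology.
Import Order.TTheory GRing.Theory Num.Theory.
HB.instance Definition _ := Order_isNbhs.Build _ R (@real_order_nbhsE R).
Set Implicit Arguments. Unset Strict Implicit. Unset Printing Implicit Defensive.

Section ContinuousCDF.
Local Open Scope ring_scope.
Local Open Scope classical_set_scope.
Variable F : R -> R.
Hypothesis F_mono : forall x y, (x <= y)%coqR -> (F x <= F y)%coqR.
Hypothesis F_cont : continuity F.
Hypothesis F_zero : forall x, (x <= 0)%coqR -> F x = 0%coqR.
Hypothesis F_one : forall x, (1 <= x)%coqR -> F x = 1%coqR.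

(* [isCumulative] needs a constant as its key. *)
Definition cdf := F.

Let cdf_nondecreasing : {homo cdf : x y / x <= y}.
Proof. by move=> x y /RleP h; apply/RleP; apply: F_mono. Qed.

Let cdf_right_continuous : right_continuous cdf.
Proof. move=> x; apply: cvg_within_filter; apply/continuity_pt_cvg; exact: F_cont. Qed.

HB.instance Definition _ :=
  isCumulative.Build R _ R cdf cdf_nondecreasing cdf_right_continuous.

Let cdf_ninfty : cdf @ -oo --> (0:R).
Proof. by apply: cvg_near_cst; exists 0%R; split => // x /ltW /RleP; exact: F_zero. Qed.

Let cdf_pinfty : cdf @ +oo --> (1:R).
Proof. by apply: cvg_near_cst; exists 1%R; split => // x /ltW /RleP; exact: F_one. Qed.

HB.instance Definition _ := isCumulativeBounded.Build R 0 1 cdf cdf_ninfty cdf_pinfty.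

Let P := lebesgue_stieltjes_measure cdf.

Let mT := g_sigma_algebraType R.-ocitv.-measurable.

Let P_fin (A : set mT) : measurable A -> P A \is a fin_num.
Proof.
move=> mA; rewrite ge0_fin_numE ?measure_ge0 //.
exact: (le_lt_trans (probability_le1 P mA) (ltry _)).
Qed.

Let P_itv_oc (a b : R) : a <= b -> P `]a, b] = (F b - F a)%:E.
Proof.
move=> ab; rewrite /P /lebesgue_stieltjes_measure /measure_extension measurable_mu_extE/=.
  by rewrite wlength_itv_bnd.
exact: is_ocitv.
Qed.

Lemma borel_measurable A : borel A -> measurable (A : set mT).
Proof.
elim => {A}.
- move=> a b.
  have -> : (fun x => (a <= x < b)%coqR) = `[a, b[%classic.
    apply/funext => x; rewrite /= in_itv /=; apply/propext; split.
      by move=> [/RleP h1 /RltP h2]; rewrite h1 h2.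
    by move=> /andP [/RleP h1 /RltP h2].
  exact: measurable_itv.
- by move=> A _ mA; exact: measurableC.
- move=> A _ mA.
  have -> : (fun x => exists n, A n x) = \bigcup_n A n.
    by apply/funext => x; apply/propext; split => -[n]; exists n.
  exact: bigcup_measurable.
- move=> A B AB _ mA.
  by have <- : A = B by apply/funext => x; apply/propext; exact: AB.
Qed.

Lemma sum_f_R0_big (s : nat -> R) n : sum_f_R0 s n = \sum_(0 <= i < n.+1) s i.
Proof.
elim: n => [|n IH]; first by rewrite big_nat1.
by rewrite big_nat_recr //= -IH.
Qed.

Lemma cvg_Un_cv_succ (u : nat -> R) l : u @ \oo --> l -> Un_cv (fun n => u n.+1) l.
Proof.
move=> ul e e0; have [N _ HN] := (@cvgrPdist_lt _ R^o _ _ _ u l).1 ul e (introT RltP e0).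
exists N => n /ssrnat.leP nN; rewrite /R_dist; apply/RltP.
by have := HN n.+1 (leqW nN); rewrite distrC.
Qed.

Let mu (A : set R) := fine (P A).

Let mu_ge0 A : (0 <= mu A)%coqR.
Proof. apply/RleP; exact: fine_ge0 (measure_ge0 _ _). Qed.

Lemma mu_sigma_additive (A : nat -> R -> Prop) :
  (forall n, borel (A n)) ->
  (forall m n x, m <> n -> A m x -> A n x -> False) ->
  infinite_sum (fun n => mu (A n)) (mu (fun x => exists n, A n x)).
Proof.
move=> bA dA.
have mA n : measurable (A n : set mT) by exact: borel_measurable.
have tA : trivIset setT A.
  move=> m n _ _ [x [h1 h2]]; apply/eqP/negPn/negP => /eqP mn.
  exact: (dA m n x mn h1 h2).
have -> : (fun x => exists n, A n x) = \bigcup_n A n.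
  by apply/funext => x; apply/propext; split => -[n]; exists n.
have mU : measurable (\bigcup_n A n : set mT) by exact: bigcup_measurable.
have cvP : (fun n => fine (\sum_(0 <= i < n) P (A i))) @ \oo --> fine (P (\bigcup_n A n)).
  apply: fine_cvg; rewrite fineK; [exact: measure_sigma_additive | exact: P_fin mU].
move=> e e0; have [N HN] := cvg_Un_cv_succ cvP e0; exists N => n nN.
have -> : sum_f_R0 (fun n0 : nat => mu (A n0)) n = fine (\sum_(0 <= i < n.+1) P (A i)).
  by rewrite sum_f_R0_big /mu sum_fine // => i _; apply: P_fin.
exact: HN.
Qed.

Let mu_set1_le (t e : R) : (0 < e)%coqR -> (mu [set t] <= F t - F (t - e))%coqR.
Proof.
move=> /RltP e0; apply/RleP; rewrite /mu.
have P1 : (P [set t] <= (F t - F (t - e))%:E)%E.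
  rewrite -P_itv_oc; last by rewrite lerBlDr lerDl ltW.
  apply: le_measure; rewrite ?inE; [exact: measurable_set1 | exact: measurable_itv | ].
  by move=> x /= ->; rewrite in_itv /= lexx andbT ltrBlDr ltrDl.
by move: P1; rewrite -(fineK (P_fin (measurable_set1 t))) lee_fin.
Qed.

Lemma mu_set1 (t : R) : mu [set t] = 0.
Proof.
apply: Rle_antisym; last exact: mu_ge0.
apply: Rnot_lt_le => h.
have [d [d0 hd]] := F_cont t h.
have e0 : (0 < d / 2)%coqR by lra.
have hle := mu_set1_le t e0.
have hne : (t - d / 2 <> t)%coqR by lra.
have hlt : (dist R_met (t - d / 2) t < d)%coqR.
  by simpl; unfold R_dist; rewrite Rabs_left1; lra.
have := hd _ (conj (conj I (nesym hne)) hlt); rewrite /= /R_dist => hF.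
have := Rabs_minus_sym (F (t - d / 2)) (F t).
have := Rle_abs (F t - F (t - d / 2))%coqR.
lra.
Qed.

Let P_set1 (t : R) : P [set t] = 0%E.
Proof. by rewrite -(fineK (P_fin (measurable_set1 t))) -/(mu _) mu_set1. Qed.

Lemma mu_itv_co (a b : R) :
  (a <= b)%coqR -> mu (fun x => (a <= x < b)%coqR) = (F b - F a)%coqR.
Proof.
move=> ab.
have -> : (fun x => (a <= x < b)%coqR) = `[a, b[%classic.
  apply/funext => x; rewrite /= in_itv /=; apply/propext; split.
    by move=> [/RleP h1 /RltP h2]; rewrite h1 h2.
  by move=> /andP [/RleP h1 /RltP h2].
have [<-|anb] := Req_dec a b.
  rewrite set_itv_ge ?bnd_simp ?lexx // /mu (_ : P set0 = 0%E); last exact: measure0.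
  by apply: esym; exact: Rminus_diag_eq.
have lab : a < b by apply/RltP; lra.
have Pcc_oc : P `[a, b] = P `]a, b].
  rewrite -(setU1itv false) ?bnd_simp ?ltW //.
  apply: (etrans (@measureU _ _ _ P [set a] `]a, b] _ _ _)).
  - exact: measurable_set1.
  - exact: measurable_itv.
  - by apply/seteqP; split => x //= [-> ]; rewrite in_itv /= ltxx.
  - by rewrite -[RHS]add0e; congr (_ + _)%E; exact: P_set1.
have Pcc_co : P `[a, b] = P `[a, b[.
  rewrite -(@setUitv1 _ _ _ _ true) ?bnd_simp ?ltW //.
  apply: (etrans (@measureU _ _ _ P `[a, b[ [set b] _ _ _)).
  - exact: measurable_itv.
  - exact: measurable_set1.
  - by apply/seteqP; split => x //= [h1 h2]; move: h1; rewrite h2 /= in_itv /= ltxx andbF.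
  - by rewrite -[RHS]adde0; congr (_ + _)%E; exact: P_set1.
by rewrite /mu -Pcc_co Pcc_oc P_itv_oc ?ltW.
Qed.

Lemma cdf_measure_exists : exists mu0 : (R -> Prop) -> R,
  borel_prob_measure_T mu0 /\ atomless mu0 /\
  forall a b, (a <= b)%coqR -> mu0 (fun x => (a <= x < b)%coqR) = (F b - F a)%coqR.
Proof.
exists mu; split; [split; [|split; [|split]] | split].
- by move=> A _; exact: mu_ge0.
- exact: mu_sigma_additive.
- by rewrite /mu (_ : P (fun _ => True) = 1%E) //; exact: probability_setT.
- rewrite mu_itv_co; last exact: Rle_0_1.
  rewrite F_one ?F_zero; try exact: Rle_refl.
  by rewrite /=; lra.
- exact: mu_set1.
- exact: mu_itv_co.
Qed.

End ContinuousCDF.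
End StieltjesMeasure.

Theorem mainTheorem11 (n : nat -> nat) (a : nat -> R)
  (hn_pos : forall k, (0 < n k)%nat)
  (hn_inc : forall k, (n k < n (S k))%nat)
  (hn_div : forall k, Nat.divide (n k) (n (S k)))
  (ha_pos : forall k, 0 < a k)
  (ha_dec : Un_decreasing a)
  (ha_lim : Un_cv a 0)
  (ha_div : cv_infty (fun N => sum_f_R0 a N)) :
  exists mu : (R -> Prop) -> R,
    borel_prob_measure_T mu /\ atomless mu /\
    forall k, exists re im,
      fourier_coeff mu (n k) re im /\ cmod_minus1 re im <= a k.
Proof.
set (p j := Rmin (1 / 2) (a j / 64)).
assert (p_ge0 : forall j, 0 <= p j).
{ intros j. pose proof (ha_pos j). apply Rmin_glb; lra. }
assert (p_le_half : forall j, p j <= 1 / 2) by (intros; apply Rmin_l).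
assert (p_diverge : cv_infty (fun N => sum_f_R0 p N)) by (apply cv_infty_sum_Rmin; auto; lra).
destruct (StieltjesMeasure.cdf_measure_exists (cantor_cdf_mono n p hn_pos hn_inc hn_div p_ge0 p_le_half)
  (cantor_cdf_continuous _ _ _ _ _ _ _ p_diverge) (cantor_cdf_zero _ _ _ _ _ _ _)
  (cantor_cdf_one _ _ _ _ _ _ _)) as [mu [Hmu [Hatom Hitv]]].
exists mu. split; [exact Hmu| split; [exact Hatom|]].
intros k. destruct (cantor_fourier_coeff n p hn_pos hn_inc hn_div p_ge0 p_le_half mu k (a k / 64) Hitv)
  as [re [im [Hfourier Hbound]]].
- intros j Hj. pose proof (decreasing_prop a k j ha_dec Hj). eapply Rle_trans; [apply Rmin_r| lra].
- exists re, im. split; [exact Hfourier|]. pose proof PI_4. pose proof (ha_pos k). nra.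
Qed.
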